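(* Let $G$ be an ample Hausdorff groupoid, let $R$ be a commutative unital ring with the discrete topology, let $T \le R^\times$, let $(\Sigma,i,q)$ be a topologically trivial discrete twist by $T$ over $G$, let $P\colon G \to \Sigma$ be a continuous global section, and let $\sigma\colon G^{(2)} \to T$ be the continuous $2$-cocycle induced by $P$, i.e. the unique map with $P(\alpha)P(\beta)P(\alpha\beta)^{-1} = i(r(\alpha),\sigma(\alpha,\beta))$ for all $(\alpha,\beta)\in G^{(2)}$. Then $\Psi(f) := f \circ P$ defines an $R$-algebra isomorphism $\Psi\colon A_R(G;\Sigma) \to A_R(G,\sigma^{-1})$, where $\sigma^{-1}(\alpha,\beta) := \sigma(\alpha,\beta)^{-1}$. If $R$ has a $T$-inverse involution, then $\Psi$ is a $*$-isomorphism.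
   Context: Groupoids are locally compact Hausdorff topological groupoids; $G$ is ample if it has a basis of compact open bisections. A discrete twist by $T$ over $G$ is a sequence $G^{(0)} \times T \xrightarrow{i} \Sigma \xrightarrow{q} G$, where $T$ carries the discrete topology, $G^{(0)} \times T$ is the trivial group bundle, $\Sigma$ is a Hausdorff groupoid with $\Sigma^{(0)} = i(G^{(0)} \times \{1\})$, $i, q$ continuous groupoid homomorphisms restricting to homeomorphisms of unit spaces, such that: (1) $i(\{x\} \times T) = q^{-1}(x)$, $i$ injective, $q$ a quotient map; (2) for each $\alpha \in G$ there are an open bisection $B_\alpha \ni \alpha$ and continuous $P_\alpha\colon B_\alpha \to \Sigma$ with $q\circ P_\alpha = \mathrm{id}$ such that $(\beta,z) \mapsto i(r(\beta),z)P_\alpha(\beta)$ is a homeomorphism $B_\alpha \times T \to q^{-1}(B_\alpha)$; (3) $i(r(\varepsilon),z)\varepsilon = \varepsilon\, i(s(\varepsilon),z)$. $T$ acts by $z\cdot\varepsilon := i(r(\varepsilon),z)\varepsilon$. A continuous global section is a continuous $P\colon G\to\Sigma$ with $q\circ P = \mathrm{id}_G$ and $P(G^{(0)})\subseteq\Sigma^{(0)}$; the twist is topologically trivial if one exists. $A_R(G;\Sigma)$ is the set of continuous $T$-equivariant ($f(z\cdot\varepsilon) = zf(\varepsilon)$) $f\colon\Sigma\to R$ with $\overline{q(\{f\neq0\})}$ compact, with pointwise module operations, multiplication $(f*_\Sigma g)(\varepsilon) = \sum_{\gamma\in G^{s(q(\varepsilon))}} f(\varepsilon P(\gamma))g(P(\gamma)^{-1})$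 and (when $R$ has a $T$-inverse involution) involution $f^*(\varepsilon) = \overline{f(\varepsilon^{-1})}$. For a continuous $2$-cocycle $\omega\colon G^{(2)}\to T$ (continuous, with $\omega(\alpha,\beta)\omega(\alpha\beta,\gamma) = \omega(\alpha,\beta\gamma)\omega(\beta,\gamma)$ and $\omega(r(\gamma),\gamma)=1=\omega(\gamma,s(\gamma))$), $A_R(G,\omega)$ is the $R$-module of locally constant compactly supported $f\colon G\to R$ with multiplication $(f*_\omega g)(\gamma) = \sum_{\alpha\beta=\gamma}\omega(\alpha,\beta)f(\alpha)g(\beta)$ and involution $f^*(\gamma) = \omega(\gamma,\gamma^{-1})^{-1}\overline{f(\gamma^{-1})}$. A $T$-inverse involution on $R$ is a ring involution $r\mapsto\overline r$ with $\overline z = z^{-1}$ for $z\in T$. *)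

From HB Require Import structures.
From mathcomp Require Import all_boot all_order all_algebra.
From mathcomp Require Import all_classical all_reals all_analysis.
Set Implicit Arguments. Unset Strict Implicit. Unset Printing Implicit Defensive.
Import Order.TTheory GRing.Theory Num.Theory.
Local Open Scope classical_set_scope.
Local Open Scope ring_scope.

(* ---------- Groupoids (algebraic part) ----------
   A groupoid on a carrier G is given by total functions r, s, inv, mul;
   mul a b is only meaningful when (a,b) is composable, i.e. s a = r b. *)
Record groupoid_ops (G : Type) := GroupoidOps {
  g_r : G -> G; g_s : G -> G; g_inv : G -> G; g_mul : G -> G -> G }.

Definition composable {G} (o : groupoid_ops G) (a b : G) := g_s o a = g_r o b.
Definition unit_space {G} (o : groupoid_ops G) : set G := [set x | g_r o x = x].
Definition range_fiber {G} (o : groupoid_ops G) (x : G) : set G := [set g | g_r o g = x].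

Definition is_groupoid {G} (o : groupoid_ops G) : Prop :=
  [/\ (forall a b, composable o a b ->
         g_r o (g_mul o a b) = g_r o a /\ g_s o (g_mul o a b) = g_s o b),
      (forall a b c, composable o a b -> composable o b c ->
         g_mul o (g_mul o a b) c = g_mul o a (g_mul o b c)),
      (forall a, g_mul o (g_r o a) a = a /\ g_mul o a (g_s o a) = a),
      (forall a, g_r o (g_inv o a) = g_s o a /\ g_s o (g_inv o a) = g_r o a) &
      (forall a, g_mul o a (g_inv o a) = g_r o a /\ g_mul o (g_inv o a) a = g_s o a)].

Definition locally_compact_hausdorff (X : topologicalType) : Prop :=
  hausdorff_space X /\ forall x : X, exists K : set X, compact K /\ nbhs x K.

Definition rel_open {X : topologicalType} (S A : set X) : Prop :=
  exists W : set X, open W /\ A = W `&` S.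

Definition homeo_on {X Y : topologicalType} (A : set X) (B : set Y) (f : X -> Y) : Prop :=
  [/\ (forall x, A x -> B (f x)),
      (forall x y, A x -> A y -> f x = f y -> x = y),
      (forall y, B y -> exists2 x, A x & f x = y),
      {within A, continuous f} &
      (forall V, V `<=` A -> rel_open A V -> rel_open B (f @` V))].

Definition is_topological_groupoid {G : topologicalType} (o : groupoid_ops G) : Prop :=
  [/\ is_groupoid o, locally_compact_hausdorff G,
      continuous (g_r o) /\ continuous (g_s o), continuous (g_inv o) &
      {within [set p : G * G | composable o p.1 p.2],
         continuous (fun p : G * G => g_mul o p.1 p.2)}].

Definition open_bisection {G : topologicalType} (o : groupoid_ops G) (B : set G) : Prop :=
  [/\ open B,
      homeo_on B (g_r o @` B) (g_r o), rel_open (unit_space o) (g_r o @` B),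
      homeo_on B (g_s o @` B) (g_s o) & rel_open (unit_space o) (g_s o @` B)].

Definition ample {G : topologicalType} (o : groupoid_ops G) : Prop :=
  forall (U : set G) (x : G), open U -> U x ->
    exists B : set G, [/\ open_bisection o B, compact B, B x & B `<=` U].

(* Locally constant = continuous into a discrete space. *)
Definition locally_constant {X : topologicalType} {Y : Type} (f : X -> Y) : Prop :=
  forall x : X, \forall y \near x, f y = f x.

Definition unit_subgroup (R : comUnitRingType) (T : set R) : Prop :=
  [/\ T 1, (forall z, T z -> z \is a GRing.unit),
      (forall z w, T z -> T w -> T (z * w)) & (forall z, T z -> T z^-1)].

Definition T_inverse_involution (R : comUnitRingType) (T : set R) (bar : R -> R) : Prop :=
  [/\ (forall a b, bar (a + b) = bar a + bar b),
      (forall a b, bar (a * b) = bar a * bar b),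
      bar 1 = 1, (forall a, bar (bar a) = a) &
      (forall z, T z -> bar z = z^-1)].

(* ---------- Discrete twists ----------
   i : G -> R -> Sigma stands for i : G^(0) x T -> Sigma (only its values
   on G^(0) x T matter); q : Sigma -> G.  T carries the discrete topology. *)
Definition discrete_twist (R : comUnitRingType) (T : set R)
    {G S : topologicalType} (oG : groupoid_ops G) (oS : groupoid_ops S)
    (i : G -> R -> S) (q : S -> G) : Prop :=
  [/\ is_topological_groupoid oS /\
      unit_space oS = [set i x 1 | x in unit_space oG],
      [/\ (forall x z w, unit_space oG x -> T z -> T w ->
             g_mul oS (i x z) (i x w) = i x (z * w)),
          (forall x z, unit_space oG x -> T z ->
             g_r oS (i x z) = i x 1 /\ g_s oS (i x z) = i x 1) &
          (forall z, T z -> {within unit_space oG, continuous (fun x => i x z)})],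
      [/\ continuous q,
          (forall a b, composable oS a b -> q (g_mul oS a b) = g_mul oG (q a) (q b)) &
          (forall a, q (g_r oS a) = g_r oG (q a) /\ q (g_s oS a) = g_s oG (q a))],
      homeo_on (unit_space oG) (unit_space oS) (fun x => i x 1) /\
      homeo_on (unit_space oS) (unit_space oG) q &
      [/\
          (forall x, unit_space oG x ->
             q @^-1` [set x] = [set i x z | z in T]),
          (forall x y z w, unit_space oG x -> unit_space oG y -> T z -> T w ->
             i x z = i y w -> x = y /\ z = w),
          (forall g, exists e, q e = g) /\
          (forall V : set G, open V <-> open (q @^-1` V)),
          (* (2) local trivialisations; since T is discrete, the homeomorphism
             B x T -> q^{-1}(B) is written out: bijective, continuous in beta
             for each fixed z, and with continuous inverse e |-> (q e, zeta e),
             i.e. zeta locally constant on q^{-1}(B). *)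
          (forall alpha : G, exists (B : set G) (Pa : G -> S),
             [/\ open_bisection oG B, B alpha,
                 {within B, continuous Pa},
                 (forall b, B b -> q (Pa b) = b) &
                 [/\ (forall b z, B b -> T z ->
                        q (g_mul oS (i (g_r oG b) z) (Pa b)) = b),
                     (forall b c z w, B b -> B c -> T z -> T w ->
                        g_mul oS (i (g_r oG b) z) (Pa b) = g_mul oS (i (g_r oG c) w) (Pa c) ->
                        b = c /\ z = w),
                     (forall z, T z ->
                        {within B, continuous (fun b => g_mul oS (i (g_r oG b) z) (Pa b))}) &
                     exists zeta : S -> R,
                       (forall e, B (q e) ->
                          T (zeta e) /\ e = g_mul oS (i (g_r oG (q e)) (zeta e)) (Pa (q e))) /\
                       (forall e, B (q e) -> \forall e' \near e, zeta e' = zeta e)]]) &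
          (forall e z, T z ->
             g_mul oS (i (q (g_r oS e)) z) e = g_mul oS e (i (q (g_s oS e)) z))]].

(* Action of T on Sigma:  z . e := i(r(e), z) e  (r(e) identified with q(r(e))) *)
Definition T_act {R : comUnitRingType} {G S : Type} (oS : groupoid_ops S)
  (i : G -> R -> S) (q : S -> G) (z : R) (e : S) : S :=
  g_mul oS (i (q (g_r oS e)) z) e.

Definition continuous_global_section {G S : topologicalType}
  (oG : groupoid_ops G) (oS : groupoid_ops S) (q : S -> G) (P : G -> S) : Prop :=
  [/\ continuous P, (forall g, q (P g) = g) &
      (forall x, unit_space oG x -> unit_space oS (P x))].

Definition A_twist {R : comUnitRingType} (T : set R) {G S : topologicalType}
  (oS : groupoid_ops S) (i : G -> R -> S) (q : S -> G) (f : S -> R) : Prop :=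
  [/\ locally_constant f,
      (forall z e, T z -> f (T_act oS i q z e) = z * f e) &
      compact (closure (q @` [set e | f e != 0]))].

Definition conv_twist {R : comUnitRingType} {G S : topologicalType}
  (oG : groupoid_ops G) (oS : groupoid_ops S) (q : S -> G) (P : G -> S)
  (f g : S -> R) : S -> R :=
  fun e => \sum_(gam \in range_fiber oG (g_s oG (q e)))
             f (g_mul oS e (P gam)) * g (g_inv oS (P gam)).

Definition star_twist {R : comUnitRingType} {S : Type} (oS : groupoid_ops S)
  (bar : R -> R) (f : S -> R) : S -> R :=
  fun e => bar (f (g_inv oS e)).

Definition A_cocycle {R : comUnitRingType} {G : topologicalType} (f : G -> R) : Prop :=
  locally_constant f /\ compact (closure [set g | f g != 0]).

Definition conv_cocycle {R : comUnitRingType} {G : topologicalType}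
  (oG : groupoid_ops G) (omega : G -> G -> R) (f g : G -> R) : G -> R :=
  fun gam => \sum_(p \in [set p : G * G | composable oG p.1 p.2 /\ g_mul oG p.1 p.2 = gam])
               omega p.1 p.2 * f p.1 * g p.2.

Definition star_cocycle {R : comUnitRingType} {G : Type} (oG : groupoid_ops G)
  (omega : G -> G -> R) (bar : R -> R) (f : G -> R) : G -> R :=
  fun gam => (omega gam (g_inv oG gam))^-1 * bar (f (g_inv oG gam)).

From mathcomp Require Import all_boot all_order all_algebra.
From mathcomp Require Import all_classical all_reals all_analysis.
Import GRing.Theory.
Local Open Scope classical_set_scope.
Local Open Scope ring_scope.

(* The global section P trivialises the twist: every e in Sigma is uniquely
   z . P(q e) with z in T, and the coordinate z(e) is locally constant because
   the local trivialisations of the twist are. So an equivariant f is determined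
   by f o P through f(e) = z(e) f(P(q e)), and every h in A_R(G, omega) extends
   to e |-> z(e) h(q e). Products and inverses in Sigma are read off from
   P(a) P(b) = sigma(a,b) . P(ab) and P(g)^-1 = sigma(g,g^-1)^-1 . P(g^-1); after
   reindexing the convolution over G^{s(x)} by g |-> (xg, g^-1), the identity
   sigma(x,g) sigma(xg,g^-1) = sigma(g,g^-1) matches the two sums term by term. *)

Set Implicit Arguments.
Unset Strict Implicit.

Lemma locally_constant_comp (X Y : topologicalType) (Z : Type) (f : Y -> Z) (g : X -> Y) :
  continuous g -> locally_constant f -> locally_constant (f \o g).
Proof. by move=> cg lcf x; exact: cg x _ (lcf (g x)). Qed.

Section Groupoid.
Variables (G : Type) (o : groupoid_ops G).
Hypothesis Ho : is_groupoid o.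

Lemma gpd_r_mul a b : composable o a b -> g_r o (g_mul o a b) = g_r o a.
Proof. by case: Ho => Hrs _ _ _ _ /Hrs[]. Qed.

Lemma gpd_s_mul a b : composable o a b -> g_s o (g_mul o a b) = g_s o b.
Proof. by case: Ho => Hrs _ _ _ _ /Hrs[]. Qed.

Lemma gpd_mulA a b c : composable o a b -> composable o b c ->
  g_mul o (g_mul o a b) c = g_mul o a (g_mul o b c).
Proof. by case: Ho => _ HA _ _ _; exact: HA. Qed.

Lemma gpd_mul_r a : g_mul o (g_r o a) a = a.
Proof. by case: Ho => _ _ Hu _ _; case: (Hu a). Qed.

Lemma gpd_mul_s a : g_mul o a (g_s o a) = a.
Proof. by case: Ho => _ _ Hu _ _; case: (Hu a). Qed.

Lemma gpd_r_inv a : g_r o (g_inv o a) = g_s o a.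
Proof. by case: Ho => _ _ _ Hi _; case: (Hi a). Qed.

Lemma gpd_s_inv a : g_s o (g_inv o a) = g_r o a.
Proof. by case: Ho => _ _ _ Hi _; case: (Hi a). Qed.

Lemma gpd_mulgV a : g_mul o a (g_inv o a) = g_r o a.
Proof. by case: Ho => _ _ _ _ Hv; case: (Hv a). Qed.

Lemma gpd_mulVg a : g_mul o (g_inv o a) a = g_s o a.
Proof. by case: Ho => _ _ _ _ Hv; case: (Hv a). Qed.

Lemma gpd_composable_gV a : composable o a (g_inv o a).
Proof. by rewrite /composable gpd_r_inv. Qed.

Lemma gpd_composable_Vg a : composable o (g_inv o a) a.
Proof. by rewrite /composable gpd_s_inv. Qed.

Lemma gpd_r_r a : g_r o (g_r o a) = g_r o a.
Proof. by have := gpd_r_mul (gpd_composable_gV a); rewrite gpd_mulgV. Qed.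

Lemma gpd_r_s a : g_r o (g_s o a) = g_s o a.
Proof. by rewrite -[g_s o a]gpd_r_inv gpd_r_r. Qed.

Lemma gpd_unit_space_r a : unit_space o (g_r o a).
Proof. exact: gpd_r_r. Qed.

Lemma gpd_unit_space_s a : unit_space o (g_s o a).
Proof. exact: gpd_r_s. Qed.

Lemma gpd_composable_mulV a b : composable o a b ->
  composable o (g_mul o a b) (g_inv o b).
Proof. by move=> cab; rewrite /composable gpd_s_mul // gpd_r_inv. Qed.

Lemma gpd_mulKV a b : composable o a b -> g_mul o (g_mul o a b) (g_inv o b) = a.
Proof.
move=> cab; rewrite gpd_mulA ?gpd_mulgV -?cab ?gpd_mul_s //; exact: gpd_composable_gV.
Qed.

Lemma gpd_divK a b : g_s o a = g_s o b -> g_mul o (g_mul o a (g_inv o b)) b = a.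
Proof.
move=> Esab; have cab : composable o a (g_inv o b) by rewrite /composable gpd_r_inv.
by rewrite gpd_mulA ?gpd_mulVg -?Esab ?gpd_mul_s //; exact: gpd_composable_Vg.
Qed.

Lemma gpd_invK a : g_inv o (g_inv o a) = a.
Proof.
have Es : g_s o (g_inv o (g_inv o a)) = g_s o a by rewrite gpd_s_inv gpd_r_inv.
by rewrite -{1}(gpd_divK Es) gpd_mulVg gpd_s_inv gpd_mul_r.
Qed.

Lemma gpd_mulgI a b c : composable o a b -> composable o a c ->
  g_mul o a b = g_mul o a c -> b = c.
Proof.
move=> cab cac Eabc; rewrite -(gpd_mul_r b) -(gpd_mul_r c) -cab -cac -gpd_mulVg.
by rewrite !gpd_mulA ?Eabc //; exact: gpd_composable_Vg.
Qed.

Lemma gpd_mulIg a b c : composable o b a -> composable o c a ->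
  g_mul o b a = g_mul o c a -> b = c.
Proof. by move=> cba cca Eabc; rewrite -(gpd_mulKV cba) -(gpd_mulKV cca) Eabc. Qed.

Lemma gpd_factorizationsE x :
  [set p : G * G | composable o p.1 p.2 /\ g_mul o p.1 p.2 = x] =
  [set (g_mul o x g, g_inv o g) | g in range_fiber o (g_s o x)].
Proof.
apply/seteqP; split=> [[a b] /= [cab <-]|_ [g Hg <-] /=].
  exists (g_inv o b); first by rewrite /range_fiber /= gpd_r_inv gpd_s_mul.
  by rewrite gpd_mulKV // gpd_invK.
have cxg : composable o x g by [].
split; first by rewrite /composable gpd_s_mul // gpd_r_inv.
exact: gpd_mulKV.
Qed.

End Groupoid.

Section UnitSubgroup.
Variables (R : comUnitRingType) (T : set R).
Hypothesis HT : unit_subgroup T.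

Lemma unit_subgroup1 : T 1.
Proof. by case: HT. Qed.

Lemma unit_subgroup_unit z : T z -> z \is a GRing.unit.
Proof. by case: HT => _ HU _ _; exact: HU. Qed.

Lemma unit_subgroupM z w : T z -> T w -> T (z * w).
Proof. by case: HT => _ _ HM _; exact: HM. Qed.

Lemma unit_subgroupV z : T z -> T z^-1.
Proof. by case: HT => _ _ _ HV; exact: HV. Qed.

End UnitSubgroup.

Section Twist.
Variables (R : comUnitRingType) (T : set R) (G S : topologicalType).
Variables (oG : groupoid_ops G) (oS : groupoid_ops S) (i : G -> R -> S) (q : S -> G).
Hypotheses (HG : is_groupoid oG) (HT : unit_subgroup T)
  (Htw : discrete_twist T oG oS i q).

Local Notation T_act := (T_act oS i q).

Lemma twist_groupoid : is_groupoid oS.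
Proof. by case: Htw => [[[]]]. Qed.

Local Hint Resolve HG twist_groupoid : core.

Lemma twist_unit_space : unit_space oS = [set i x 1 | x in unit_space oG].
Proof. by case: Htw => [[]]. Qed.

Lemma i_mul x z w : unit_space oG x -> T z -> T w ->
  g_mul oS (i x z) (i x w) = i x (z * w).
Proof. by case: Htw => _ [Hm _ _] _ _ _; exact: Hm. Qed.

Lemma i_r x z : unit_space oG x -> T z -> g_r oS (i x z) = i x 1.
Proof. by case: Htw => _ [_ Hrs _] _ _ _ ux Tz; case: (Hrs x z ux Tz). Qed.

Lemma i_s x z : unit_space oG x -> T z -> g_s oS (i x z) = i x 1.
Proof. by case: Htw => _ [_ Hrs _] _ _ _ ux Tz; case: (Hrs x z ux Tz). Qed.

Lemma q_continuous : continuous q.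
Proof. by case: Htw => _ _ []. Qed.

Lemma q_mul a b : composable oS a b -> q (g_mul oS a b) = g_mul oG (q a) (q b).
Proof. by case: Htw => _ _ [_ Hm _] _ _; exact: Hm. Qed.

Lemma q_r a : q (g_r oS a) = g_r oG (q a).
Proof. by case: Htw => _ _ [_ _ Hrs] _ _; case: (Hrs a). Qed.

Lemma q_s a : q (g_s oS a) = g_s oG (q a).
Proof. by case: Htw => _ _ [_ _ Hrs] _ _; case: (Hrs a). Qed.

Lemma q_fiber x : unit_space oG x -> q @^-1` [set x] = [set i x z | z in T].
Proof. by case: Htw => _ _ _ _ [Hf _ _ _ _]; exact: Hf. Qed.

Lemma i_inj x z w : unit_space oG x -> T z -> T w -> i x z = i x w -> z = w.
Proof. by case: Htw => _ _ _ _ [_ Hi _ _ _] ux Tz Tw /Hi[]. Qed.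

Lemma i_central e z : T z ->
  g_mul oS (i (q (g_r oS e)) z) e = g_mul oS e (i (q (g_s oS e)) z).
Proof. by case: Htw => _ _ _ _ [_ _ _ _ Hc]; exact: Hc. Qed.

Lemma q_i x z : unit_space oG x -> T z -> q (i x z) = x.
Proof.
move=> ux Tz; suff : (q @^-1` [set x]) (i x z) by [].
by rewrite q_fiber //; exists z.
Qed.

Lemma twist_unitE u : unit_space oS u -> u = i (q u) 1.
Proof.
rewrite twist_unit_space => -[x ux <-].
by rewrite q_i //; exact: unit_subgroup1.
Qed.

Lemma twist_rE e : g_r oS e = i (g_r oG (q e)) 1.
Proof. by rewrite -q_r; apply: twist_unitE; exact: gpd_unit_space_r. Qed.

Lemma twist_sE e : g_s oS e = i (g_s oG (q e)) 1.
Proof. by rewrite -q_s; apply: twist_unitE; exact: gpd_unit_space_s. Qed.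

Lemma twist_composable a b : composable oG (q a) (q b) -> composable oS a b.
Proof. by rewrite /composable twist_rE twist_sE => ->. Qed.

Lemma q_composable a b : composable oS a b -> composable oG (q a) (q b).
Proof. by rewrite /composable -q_s -q_r => ->. Qed.

Lemma T_actE w e : T_act w e = g_mul oS (i (g_r oG (q e)) w) e.
Proof. by rewrite /T_act q_r. Qed.

Lemma T_act_composable w e : T w -> composable oS (i (g_r oG (q e)) w) e.
Proof.
by move=> Tw; rewrite /composable i_s ?twist_rE //; exact: gpd_unit_space_r.
Qed.

Lemma q_T_act w e : T w -> q (T_act w e) = q e.
Proof.
move=> Tw; rewrite T_actE q_mul ?q_i ?gpd_mul_r //; first exact: gpd_unit_space_r.
exact: T_act_composable.
Qed.

Lemma T_act1 e : T_act 1 e = e.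
Proof. by rewrite /T_act -twist_unitE ?gpd_mul_r //; exact: gpd_unit_space_r. Qed.

Lemma T_actM w w' e : T w -> T w' -> T_act w (T_act w' e) = T_act (w * w') e.
Proof.
move=> Tw Tw'; set x := g_r oG (q e).
have ux : unit_space oG x by exact: gpd_unit_space_r.
have cww' : composable oS (i x w) (i x w').
  by have := T_act_composable (i x w') Tw; rewrite q_i // ux.
rewrite T_actE q_T_act // !T_actE -/x -gpd_mulA ?i_mul //; exact: T_act_composable.
Qed.

Lemma T_act_mull w e f : T w -> composable oS e f ->
  T_act w (g_mul oS e f) = g_mul oS (T_act w e) f.
Proof.
move=> Tw cef; rewrite !T_actE q_mul // gpd_r_mul ?gpd_mulA //; last exact: q_composable.
exact: T_act_composable.
Qed.

Lemma T_act_mulr w e f : T w -> composable oS e f ->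
  T_act w (g_mul oS e f) = g_mul oS e (T_act w f).
Proof.
move=> Tw cef; have uf : unit_space oG (q (g_r oS f)) by rewrite q_r; exact: gpd_unit_space_r.
rewrite T_act_mull // /T_act i_central // cef gpd_mulA //.
- by rewrite /composable cef i_r // -twist_unitE //; exact: gpd_unit_space_r.
- by rewrite q_r; exact: T_act_composable.
Qed.

Lemma T_act_inj w w' e : T w -> T w' -> T_act w e = T_act w' e -> w = w'.
Proof.
move=> Tw Tw'; rewrite !T_actE => E.
apply: (i_inj (gpd_unit_space_r HG (q e)) Tw Tw').
exact: gpd_mulIg (T_act_composable _ Tw) (T_act_composable _ Tw') E.
Qed.

Lemma T_act_fiber e p : q e = q p -> exists2 w, T w & e = T_act w p.
Proof.
move=> Eqep; have Esep : g_s oS e = g_s oS p by rewrite !twist_sE Eqep.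
have cep : composable oS e (g_inv oS p) by rewrite /composable gpd_r_inv.
have : (q @^-1` [set g_r oG (q p)]) (g_mul oS e (g_inv oS p)).
  rewrite /= q_mul // Eqep -q_mul ?gpd_mulgV ?q_r //; exact: gpd_composable_gV.
rewrite q_fiber; last exact: gpd_unit_space_r.
by case=> w Tw Ew; exists w; rewrite // T_actE Ew gpd_divK.
Qed.

Lemma twist_local_coordinate alpha : exists (B : set G) (Pa : G -> S) (zeta : S -> R),
  [/\ open B, B alpha,
      forall e, B (q e) -> T (zeta e) /\ e = T_act (zeta e) (Pa (q e)) &
      forall e, B (q e) -> \forall e' \near e, zeta e' = zeta e].
Proof.
case: Htw => _ _ _ _ [_ _ _ Htriv _].
have [B [Pa [[oB _ _ _ _] Balpha _ qPa [_ _ _ [zeta [Hz lcz]]]]]] := Htriv alpha.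
exists B, Pa, zeta; split=> // e Be.
by rewrite T_actE qPa //; exact: Hz.
Qed.

Section GlobalSection.
Variables (P : G -> S) (sigma : G -> G -> R).
Hypotheses (HP : continuous_global_section oG oS q P)
  (Hsig : forall a b, composable oG a b ->
     T (sigma a b) /\
     g_mul oS (g_mul oS (P a) (P b)) (g_inv oS (P (g_mul oG a b))) = i (g_r oG a) (sigma a b)).

Lemma qP g : q (P g) = g.
Proof. by case: HP. Qed.

Lemma P_continuous : continuous P.
Proof. by case: HP. Qed.

Lemma P_unit x : unit_space oG x -> P x = i x 1.
Proof. by case: HP => _ _ Pu ux; rewrite {1}(twist_unitE (Pu x ux)) qP. Qed.

Lemma P_r g : P (g_r oG g) = g_r oS (P g).
Proof. by rewrite P_unit ?twist_rE ?qP //; exact: gpd_unit_space_r. Qed.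

Lemma P_s g : P (g_s oG g) = g_s oS (P g).
Proof. by rewrite P_unit ?twist_sE ?qP //; exact: gpd_unit_space_s. Qed.

Lemma sigma_T a b : composable oG a b -> T (sigma a b).
Proof. by case/Hsig. Qed.

Lemma P_composable a b : composable oG a b -> composable oS (P a) (P b).
Proof. by move=> cab; apply: twist_composable; rewrite !qP. Qed.

Lemma P_mul a b : composable oG a b ->
  g_mul oS (P a) (P b) = T_act (sigma a b) (P (g_mul oG a b)).
Proof.
move=> cab; have [_ Esig] := Hsig cab.
have Es : g_s oS (g_mul oS (P a) (P b)) = g_s oS (P (g_mul oG a b)).
  by rewrite gpd_s_mul -?P_s ?gpd_s_mul //; exact: P_composable.
by rewrite -{1}(gpd_divK _ Es) // Esig T_actE qP gpd_r_mul.
Qed.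

Lemma P_inv g : g_inv oS (P g) = T_act (sigma g (g_inv oG g))^-1 (P (g_inv oG g)).
Proof.
have cg := gpd_composable_gV HG g; have cPg := P_composable cg.
have Tc := sigma_T cg; have Tc' := unit_subgroupV HT Tc.
apply: (gpd_mulgI twist_groupoid (a := P g)).
- exact: gpd_composable_gV.
- by apply: twist_composable; rewrite q_T_act // !qP.
rewrite gpd_mulgV // -T_act_mulr // P_mul // T_actM //.
by rewrite mulVr ?(unit_subgroup_unit HT) // T_act1 gpd_mulgV // P_r.
Qed.

Lemma sigma_cocycle_inv x g : composable oG x g ->
  sigma x g * sigma (g_mul oG x g) (g_inv oG g) = sigma g (g_inv oG g).
Proof.
move=> cxg; have cg := gpd_composable_gV HG g.
have cxgg := gpd_composable_mulV HG cxg.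
have Ta := sigma_T cxg; have Tb := sigma_T cxgg; have Tc := sigma_T cg.
have cPxgg := P_composable cxgg.
have cPxs : composable oS (P x) (g_s oS (P x)) by rewrite /composable gpd_r_s.
(* Associate P x * P g * P (g^-1) both ways. *)
have Ea : T_act (sigma x g * sigma (g_mul oG x g) (g_inv oG g)) (P x) =
          g_mul oS (g_mul oS (P x) (P g)) (P (g_inv oG g)).
  by rewrite P_mul // -T_act_mull // P_mul // T_actM // gpd_mulKV.
have Eb : T_act (sigma g (g_inv oG g)) (P x) =
          g_mul oS (P x) (g_mul oS (P g) (P (g_inv oG g))).
  by rewrite P_mul // gpd_mulgV // -cxg P_s -T_act_mulr // gpd_mul_s.
apply: (T_act_inj (e := P x)) => //; first exact: unit_subgroupM.
by rewrite Ea Eb gpd_mulA //; exact: P_composable.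
Qed.

(* The default 0 of [xget] is never returned: by [T_act_fiber] and
   [T_act_inj] the set below is a singleton. *)
Definition section_coord (e : S) : R :=
  xget 0 [set w | T w /\ e = T_act w (P (q e))].

Lemma section_coordP e : T (section_coord e) /\ e = T_act (section_coord e) (P (q e)).
Proof.
have [w Tw Ew] := T_act_fiber (esym (qP (q e))).
exact: (@xgetI _ 0 [set w | T w /\ e = T_act w (P (q e))] w).
Qed.

Lemma section_coord_unique e w : T w -> e = T_act w (P (q e)) -> section_coord e = w.
Proof.
move=> Tw Ew; have [Tc Ec] := section_coordP e.
by apply: (T_act_inj (e := P (q e))) => //; rewrite -Ec -Ew.
Qed.

Lemma section_coord_P g : section_coord (P g) = 1.
Proof.
by apply: section_coord_unique; [exact: unit_subgroup1 | rewrite qP T_act1].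
Qed.

Lemma section_coord_T_act w e : T w -> section_coord (T_act w e) = w * section_coord e.
Proof.
move=> Tw; have [Tc Ec] := section_coordP e.
apply: section_coord_unique; first exact: unit_subgroupM.
by rewrite q_T_act // -T_actM // -Ec.
Qed.

Lemma section_coord_locally_constant : locally_constant section_coord.
Proof.
move=> e; have [B [Pa [zeta [oB Bqe Hzeta lczeta]]]] := twist_local_coordinate (q e).
have coordE e' : B (q e') -> section_coord e' = zeta e' * (zeta (P (q e')))^-1.
  move=> Be'; have [Tz Ez] := Hzeta e' Be'.
  have BqP : B (q (P (q e'))) by rewrite qP.
  have [Tu Eu] := Hzeta _ BqP; rewrite qP in Eu.
  have Tzu : T (zeta e' * (zeta (P (q e')))^-1).
    by apply: unit_subgroupM => //; exact: unit_subgroupV.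
  apply: section_coord_unique => //.
  by rewrite {2}Eu T_actM // mulrVK ?(unit_subgroup_unit HT).
have BqPqe : B (q (P (q e))) by rewrite qP.
have NB : \forall e' \near e, B (q e').
  exact: q_continuous (open_nbhs_nbhs (conj oB Bqe)).
have Nu : \forall e' \near e, zeta (P (q e')) = zeta (P (q e)).
  exact: q_continuous (P_continuous (lczeta _ BqPqe)).
apply: (filterS3 _ _ NB (lczeta e Bqe) Nu) => e' Be' Ez Eu.
by rewrite !coordE // Ez Eu.
Qed.

Lemma A_twist_coordE f e : A_twist T oS i q f -> f e = section_coord e * f (P (q e)).
Proof.
case=> _ feq _; have [Tc Ec] := section_coordP e.
by rewrite {1}Ec feq.
Qed.

Lemma A_twist_comp_section f : A_twist T oS i q f -> A_cocycle (f \o P).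
Proof.
case=> lcf _ cpf; split; first exact: locally_constant_comp P_continuous lcf.
apply: (subclosed_compact _ cpf); first exact: closed_closure.
by apply: closureS => g /= fPg; exists (P g); rewrite ?qP.
Qed.

Lemma A_twist_comp_section_inj f1 f2 : A_twist T oS i q f1 -> A_twist T oS i q f2 ->
  f1 \o P = f2 \o P -> f1 = f2.
Proof.
move=> Hf1 Hf2 E; apply: funext => e.
rewrite (A_twist_coordE e Hf1) (A_twist_coordE e Hf2); congr (_ * _).
exact: (congr1 (fun F => F (q e)) E).
Qed.

Lemma A_twist_extend h : A_cocycle h ->
  A_twist T oS i q (fun e => section_coord e * h (q e)).
Proof.
case=> lch cph; split.
- move=> e; apply: (filterS2 _ _ (section_coord_locally_constant e)
    (locally_constant_comp q_continuous lch e)).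
  by move=> e' /= -> ->.
- by move=> w e Tw; rewrite section_coord_T_act // q_T_act // mulrA.
suff -> : q @` [set e | section_coord e * h (q e) != 0] = [set g | h g != 0] by [].
apply/seteqP; split=> [_ [e /= + <-]|g /= hg].
  by apply: contraNN => /eqP ->; rewrite mulr0.
by exists (P g); rewrite ?section_coord_P ?mul1r qP.
Qed.

Lemma A_twist_comp_section_surj h : A_cocycle h ->
  exists2 f, A_twist T oS i q f & f \o P = h.
Proof.
move=> Hh; exists (fun e => section_coord e * h (q e)); first exact: A_twist_extend.
by apply: funext => g /=; rewrite section_coord_P mul1r qP.
Qed.

Lemma conv_twist_comp_section f g : A_twist T oS i q f -> A_twist T oS i q g ->
  conv_twist oG oS q P f g \o P =
  conv_cocycle oG (fun a b => (sigma a b)^-1) (f \o P) (g \o P).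
Proof.
case=> _ feq _ [_ geq _]; apply: funext => x.
rewrite /conv_twist /conv_cocycle /= qP gpd_factorizationsE // fsbig_image; last first.
  by move=> a b _ _ [_ /(congr1 (g_inv oG))]; rewrite !gpd_invK.
apply: eq_fsbigr => y /set_mem Hy.
have cxy : composable oG x y by rewrite /composable Hy.
have cy := gpd_composable_gV HG y.
have Ta := sigma_T cxy; have Tc := sigma_T cy; have Tc' := unit_subgroupV HT Tc.
have Tb := sigma_T (gpd_composable_mulV HG cxy).
rewrite P_mul // P_inv feq // geq // /= -(sigma_cocycle_inv cxy).
set a := sigma x y; set b := sigma _ _.
rewrite invrM ?(unit_subgroup_unit HT) // -!mulrA [b^-1 * _]mulrCA [_ * (a^-1 * _)]mulrCA.
by rewrite mulVKr ?(unit_subgroup_unit HT) // mulrCA.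
Qed.

Lemma star_twist_comp_section bar f : T_inverse_involution T bar -> A_twist T oS i q f ->
  star_twist oS bar f \o P = star_cocycle oG (fun a b => (sigma a b)^-1) bar (f \o P).
Proof.
case=> _ barM _ _ barT [_ feq _]; apply: funext => x.
have Tc := sigma_T (gpd_composable_gV HG x); have Tc' := unit_subgroupV HT Tc.
by rewrite /star_twist /star_cocycle /= P_inv feq // barM barT.
Qed.

End GlobalSection.

End Twist.

Theorem theorem4p23 (R : comUnitRingType) (T : set R)
  (G S : topologicalType) (oG : groupoid_ops G) (oS : groupoid_ops S)
  (i : G -> R -> S) (q : S -> G) (P : G -> S) (sigma : G -> G -> R) :
  is_topological_groupoid oG -> ample oG ->
  unit_subgroup T ->
  discrete_twist T oG oS i q ->
  continuous_global_section oG oS q P ->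
  (forall a b, composable oG a b ->
     T (sigma a b) /\
     g_mul oS (g_mul oS (P a) (P b)) (g_inv oS (P (g_mul oG a b)))
       = i (g_r oG a) (sigma a b)) ->
  let omega := fun a b => (sigma a b)^-1 in
  let Psi := fun f : S -> R => f \o P in
  [/\ (forall f, A_twist T oS i q f -> A_cocycle (Psi f)),
      (forall f1 f2, A_twist T oS i q f1 -> A_twist T oS i q f2 ->
         Psi f1 = Psi f2 -> f1 = f2) /\
      (forall h, A_cocycle h -> exists2 f, A_twist T oS i q f & Psi f = h),
      (forall (c : R) f g, A_twist T oS i q f -> A_twist T oS i q g ->
         Psi (fun e => f e + g e) = (fun x => Psi f x + Psi g x) /\
         Psi (fun e => c * f e) = (fun x => c * Psi f x)),
      (forall f g, A_twist T oS i q f -> A_twist T oS i q g ->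
         Psi (conv_twist oG oS q P f g) = conv_cocycle oG omega (Psi f) (Psi g)) &
      (forall bar : R -> R, T_inverse_involution T bar ->
         forall f, A_twist T oS i q f ->
         Psi (star_twist oS bar f) = star_cocycle oG omega bar (Psi f))].
Proof.
move=> [HG _ _ _ _] _ HT Htw HP Hsig omega Psi; rewrite {}/omega {}/Psi; split.
- exact: A_twist_comp_section HP.
- split=> [f1 f2|h]; first exact: (A_twist_comp_section_inj HG HT Htw HP (f1 := f1)).
  exact: (A_twist_comp_section_surj HG HT Htw HP (h := h)).
- by [].
- move=> f g; exact: (conv_twist_comp_section HG HT Htw HP Hsig (f := f)).
- move=> bar Hbar f; exact: (star_twist_comp_section HG HT Htw HP Hsig (f := f)).
Qed.
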